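(* With the notation of the context, for every $\rho\in S$ the set $U(\rho)$ is nonempty and not meager with respect to the topology $\tau$; in particular $\langle H,\tau\rangle$ is a Baire space.
   Context: Work in $2^\omega$ with coordinatewise addition mod 2 (also used for finite 0-1 sequences of equal domain). Fix integers $0=n_0<n_1<n_2<\cdots$ and sets $C_i\subseteq 2^{[n_i,n_{i+1})}$ such that for every $i$ and all $s_0,\ldots,s_{n_i}\in 2^{[n_i,n_{i+1})}$ both $\bigcap_{k\le n_i}(C_i+s_k)$ and $\bigcap_{k\le n_i}((2^{[n_i,n_{i+1})}\setminus C_i)+s_k)$ are nonempty. Let $H=\{x\in 2^\omega: x\restriction[n_i,n_{i+1})\in C_i \text{ for all } i\}$. Fix a sequence $\langle P_m:m\in\omega\rangle$ of nonempty perfect subsets of $2^\omega$; let $P_m^*=\{x+y:x,y\in P_m\}$ and $T_m^*=\{x\restriction k: x\in P_m^*, k\in\omega\}$. A tree mapping with domain $n\ge1$ is a partial function $\pi$ from $\{(k,\ell):k<\ell<n\}$ to $\omega$ such that for every $0<\ell<n$ there is exactly one $k<\ell$ with $\pi(k,\ell)$ defined. A finite sequence $s$ is acceptable if ${\rm dom}(s)=n_i$ for some $i$ and $s\restriction[n_j,n_{j+1})\in C_j$ for all $j<i$. $S$ is the set of all $\rho=\langle\pi,s_0,\ldots,s_{n-1}\rangle$ where $n=n(\rho)\ge1$, $\pi$ is a tree mapping with domain $n$, the $s_j$ are acceptable with a common domain $n_i$ with $n_i\ge n$ (put $i(\rho)=i$), and $s_k+s_\ell\in T^*_{\pi(k,\ell)}$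 whenever $\pi(k,\ell)$ is defined. For $\rho=\langle\pi,s_0,\ldots,s_{n-1}\rangle\in S$, $U(\rho)$ is the set of $x_0\in H$ for which there are $x_1,\ldots,x_{n-1}\in H$ with each $s_j$ an initial segment of $x_j$ and $\langle\pi,x_0\restriction n_j,\ldots,x_{n-1}\restriction n_j\rangle\in S$ for all $j>i(\rho)$. The sets $U(\rho)$, $\rho\in S$, form a basis of a topology $\tau$ on $H$. *)

From HB Require Import structures.
From mathcomp Require Import all_boot all_order all_algebra.
From mathcomp Require Import boolp classical_sets functions topology cantor.

Set Implicit Arguments.
Unset Strict Implicit.
Unset Printing Implicit Defensive.

Local Open Scope classical_set_scope.

(** 2^omega is [cantor_space] (= nat -> bool with the product topology).
    Finite 0-1 sequences with domain k = {0,...,k-1} are [seq bool] of size k. *)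

Definition seqadd (s t : seq bool) : seq bool := [seq xorb p.1 p.2 | p <- zip s t].

Definition restr (x : cantor_space) (k : nat) : seq bool := mkseq (fun j => x j) k.

Section Setting.
Variable (n : nat -> nat).                 (* 0 = n_0 < n_1 < ... *)
Variable (C : nat -> set (seq bool)).      (* C i ⊆ 2^[n_i, n_{i+1}) *)
Variable (P : nat -> set cantor_space).

(** length of the block [n_i, n_{i+1}) ; an element of 2^[n_i,n_{i+1}) is
    represented by the seq of its values at n_i, n_i + 1, ..., n_{i+1} - 1 *)
Definition blen (i : nat) : nat := n i.+1 - n i.

Definition xblock (x : cantor_space) (i : nat) : seq bool :=
  mkseq (fun j => x (n i + j)) (blen i).

Definition sblock (s : seq bool) (j : nat) : seq bool :=
  drop (n j) (take (n j.+1) s).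

Definition H : set cantor_space := [set x | forall i, C i (xblock x i)].

Definition Pstar (m : nat) : set cantor_space :=
  [set z | exists x y, P m x /\ P m y /\ z = (fun j => xorb (x j) (y j))].

Definition Tstar (m : nat) : set (seq bool) :=
  [set t | exists z k, Pstar m z /\ t = restr z k].

(** tree mapping with domain N >= 1: a partial function (option-valued)
    from {(k,l) : k < l < N} to nat *)
Definition tree_mapping (pi : nat -> nat -> option nat) (N : nat) : Prop :=
  1 <= N /\
  (forall k l, pi k l <> None -> k < l < N) /\
  (forall l, 0 < l < N -> exists! k, k < l /\ pi k l <> None).

Definition acceptable (s : seq bool) : Prop :=
  exists i, size s = n i /\ forall j, j < i -> C j (sblock s j).

(** rho = <pi, s_0, ..., s_{N-1}> (with ss = [:: s_0; ...; s_{N-1}]) is in S,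
    with i(rho) = i *)
Definition inS_at (i : nat) (pi : nat -> nat -> option nat) (ss : seq (seq bool)) : Prop :=
  tree_mapping pi (size ss) /\
  (forall s, s \in ss -> acceptable s /\ size s = n i) /\
  size ss <= n i /\
  (forall k l m, pi k l = Some m ->
     Tstar m (seqadd (nth [::] ss k) (nth [::] ss l))).

Definition inS (pi : nat -> nat -> option nat) (ss : seq (seq bool)) : Prop :=
  exists i, inS_at i pi ss.

Definition U (pi : nat -> nat -> option nat) (ss : seq (seq bool)) : set cantor_space :=
  [set x0 | exists i, inS_at i pi ss /\ H x0 /\
     exists xs : nat -> cantor_space,
       xs 0 = x0 /\
       (forall l, l < size ss -> H (xs l)) /\
       (forall l, l < size ss -> restr (xs l) (size (nth [::] ss l)) = nth [::] ss l) /\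
       (forall j, i < j -> inS pi (mkseq (fun l => restr (xs l) (n j)) (size ss)))].

(** the topology tau on H generated by the basis {U(rho) : rho in S}:
    open sets are the unions of basic sets *)
Definition tau_open (A : set cantor_space) : Prop :=
  A `<=` H /\
  forall x, A x -> exists pi ss, inS pi ss /\ U pi ss x /\ U pi ss `<=` A.

Definition tau_interior (A : set cantor_space) : set cantor_space :=
  [set x | exists V, tau_open V /\ V x /\ V `<=` A].

Definition tau_closure (A : set cantor_space) : set cantor_space :=
  [set x | H x /\ forall V, tau_open V -> V x -> exists y, V y /\ A y].

Definition tau_nowhere_dense (A : set cantor_space) : Prop :=
  A `<=` H /\ tau_interior (tau_closure A) = set0.

Definition tau_meager (A : set cantor_space) : Prop :=
  A `<=` H /\
  exists F : nat -> set cantor_space,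
    (forall k, tau_nowhere_dense (F k)) /\ A `<=` \bigcup_k F k.

Definition tau_Baire : Prop :=
  forall V, tau_open V -> V !=set0 -> ~ tau_meager V.

End Setting.

From Pilot Require Import Defs.
From HB Require Import structures.
From mathcomp Require Import all_boot all_order all_algebra.
From mathcomp Require Import boolp classical_sets functions topology cantor.
From mathcomp Require Import zify.

(* Nonemptiness: an element rho of S is extended one level at a time.  Walking
   from the root along the tree of rho, the current points are written as
   c_0, c_l = c_(parent l) + z_l, with z_l in P*_m realizing the edge into l;
   the richness of C_j gives one block s with s + c_l in C_j for every l, and
   appending s + c_l to the l-th point keeps every edge inside T*_m.  The
   pointwise limit of these extensions witnesses a point of U(rho).
   Non-meagerness: given nowhere dense F_0, F_1, ..., a fusion sequence of
   stages is built, each stage grafting onto the root of the previous tree the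
   tree of a basic set that avoids F_r and meets the previous basic set; the
   limit of the stages lies in all their basic sets, hence in no F_r. *)

Set Implicit Arguments.
Unset Strict Implicit.
Unset Printing Implicit Defensive.

Local Open Scope classical_set_scope.

Lemma iterate_step T (Inv : nat -> T -> Prop) (R : nat -> T -> T -> Prop) (x0 : T) :
  Inv 0 x0 -> (forall r x, Inv r x -> exists2 y, Inv r.+1 y & R r x y) ->
  exists f : nat -> T, f 0 = x0 /\ forall r, Inv r (f r) /\ R r (f r) (f r.+1).
Proof.
move=> Inv0 step.
have /choice[g gP] : forall p : nat * T,
    exists y, Inv p.1 p.2 -> Inv p.1.+1 y /\ R p.1 p.2 y.
  move=> [r x]; have [/step[y Iy Ry]|nIx] := pselect (Inv r x); first by exists y.
  by exists x => /nIx.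
pose f := fix f r := if r is r'.+1 then g (r', f r') else x0.
have Inv_f r : Inv r (f r) by elim: r => //= r IH; exact: (gP (r, f r) IH).1.
by exists f; split=> // r; split=> //; exact: (gP (r, f r) (Inv_f r)).2.
Qed.

Lemma stable_shift T (a : nat -> T) (Q : nat -> Prop)
    (stepQ : forall r, Q r -> Q r.+1 /\ a r.+1 = a r) r d :
  Q r -> Q (r + d) /\ a (r + d) = a r.
Proof.
move=> Qr; elim: d => [|d [Qd ad]]; first by rewrite addn0.
by rewrite addnS; have [? ->] := stepQ _ Qd.
Qed.

Lemma eventually_stable T (a : nat -> T) (Q : nat -> Prop) :
  (forall r, Q r -> Q r.+1 /\ a r.+1 = a r) -> exists v, forall r, Q r -> a r = v.
Proof.
move=> stepQ; have [[r0 Qr0]|noQ] := pselect (exists r, Q r).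
  exists (a r0) => r Qr.
  by rewrite -(stable_shift stepQ r Qr0).2 -(stable_shift stepQ r0 Qr).2 addnC.
by exists (a 0) => r Qr; case: noQ; exists r.
Qed.

Lemma fusion_limit (f : nat -> nat -> cantor_space) (N b : nat -> nat) :
  {homo N : r s / r <= s} -> {homo b : r s / r <= s} ->
  (forall r l t, l < N r -> t < b r -> f r.+1 l t = f r l t) ->
  exists g : nat -> cantor_space,
    forall r l t, l < N r -> t < b r -> g l t = f r l t.
Proof.
move=> N_homo b_homo f_stable.
have /choice[g gP] (p : nat * nat) :
    exists v, forall r, p.1 < N r -> p.2 < b r -> f r p.1 p.2 = v.
  have [|v vP] := @eventually_stable _ (fun r => f r p.1 p.2)
    (fun r => p.1 < N r /\ p.2 < b r).
    move=> r [lN tb]; rewrite f_stable //; split=> //.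
    by split; [apply: leq_trans lN (N_homo _ _ _) | apply: leq_trans tb (b_homo _ _ _)].
  by exists v => r lN tb; apply: vP.
by exists (fun l t => g (l, t)) => r l t lN tb; rewrite (gP (l, t) r).
Qed.

Definition xorc (x y : cantor_space) : cantor_space := fun t => xorb (x t) (y t).

Lemma size_restr x k : size (restr x k) = k.
Proof. exact: size_mkseq. Qed.

Lemma nth_restr x k t : t < k -> nth false (restr x k) t = x t.
Proof. exact: nth_mkseq. Qed.

Lemma eq_restr (x y : cantor_space) k :
  (forall t, t < k -> x t = y t) -> restr x k = restr y k.
Proof.
move=> xy; apply: (@eq_from_nth _ false); rewrite !size_restr // => t tk.
by rewrite !nth_restr // xy.
Qed.

Lemma restr_inj (x y : cantor_space) k k' :
  restr x k = restr y k' -> k = k' /\ forall t, t < k -> x t = y t.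
Proof.
move=> xy; have kk' : k = k' by rewrite -(size_restr x k) xy size_restr.
by split=> // t tk; rewrite -(nth_restr x tk) xy nth_restr -?kk'.
Qed.

Lemma restr_nth s : restr (fun t => nth false s t) (size s) = s.
Proof. exact: mkseq_nth. Qed.

Lemma seqadd_mkseq (f g : nat -> bool) k :
  seqadd (mkseq f k) (mkseq g k) = mkseq (fun t => xorb (f t) (g t)) k.
Proof. by rewrite /seqadd /mkseq zip_map -map_comp. Qed.

Lemma seqadd_restr x y k : seqadd (restr x k) (restr y k) = restr (xorc x y) k.
Proof. exact: seqadd_mkseq. Qed.

Lemma Tstar_restr_leq P m z a b :
  Tstar P m (restr z a) -> b <= a -> Tstar P m (restr z b).
Proof.
move=> [z' [k [Pz /restr_inj[_ zz']]]] ba; exists z', b; split=> //.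
by apply: eq_restr => t tb; apply: zz'; apply: leq_trans tb ba.
Qed.

Definition restrs (xs : nat -> cantor_space) (N k : nat) : seq (seq bool) :=
  mkseq (fun l => restr (xs l) k) N.

Lemma size_restrs xs N k : size (restrs xs N k) = N.
Proof. exact: size_mkseq. Qed.

Lemma nth_restrs xs N k l : l < N -> nth [::] (restrs xs N k) l = restr (xs l) k.
Proof. exact: nth_mkseq. Qed.

Lemma restrsP xs N k s :
  reflect (exists2 l, l < N & s = restr (xs l) k) (s \in restrs xs N k).
Proof.
apply: (iffP mapP) => [[l]|[l lN ->]]; last by exists l; rewrite ?mem_iota.
by rewrite mem_iota => lN ->; exists l.
Qed.

Lemma eq_restrs xs ys N k :
  (forall l t, l < N -> t < k -> xs l t = ys l t) -> restrs xs N k = restrs ys N k.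
Proof.
move=> xy; apply: (@eq_from_nth _ [::]); rewrite !size_restrs // => l lN.
by rewrite !nth_restrs //; apply: eq_restr => t; apply: xy.
Qed.

Lemma restrs_inj xs ys N N' k k' : restrs xs N k = restrs ys N' k' ->
  forall l t, l < N -> t < k -> xs l t = ys l t.
Proof.
move=> xy l t lN; have NN' : N = N' by rewrite -(size_restrs xs N k) xy size_restrs.
have := nth_restrs xs k lN; rewrite xy nth_restrs -?NN' // => /esym/restr_inj[_]; apply.
Qed.

Record stage := Stage {
  stage_tree : nat -> nat -> option nat;
  stage_size : nat;
  stage_level : nat;
  stage_pts : nat -> cantor_space }.

Section Fusion.
Variables (n : nat -> nat) (C : nat -> set (seq bool)) (P : nat -> set cantor_space).
Hypothesis n_incr : forall i, n i < n i.+1.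
Hypothesis C_rich : forall i (ss : seq (seq bool)),
  size ss = (n i).+1 ->
  (forall s, s \in ss -> size s = blen n i) ->
  (exists t, size t = blen n i /\ forall s, s \in ss -> C i (seqadd t s)) /\
  (exists t, size t = blen n i /\ forall s, s \in ss -> ~ C i (seqadd t s)).

Local Notation H := (H n C).
Local Notation inS_at := (inS_at n C P).
Local Notation inS := (inS n C P).
Local Notation U := (U n C P).
Local Notation tau_open := (tau_open n C P).
Local Notation tau_nowhere_dense := (tau_nowhere_dense n C P).
Local Notation tau_meager := (tau_meager n C P).

Lemma n_mono : {mono n : i j / i <= j}.
Proof. by apply: leq_mono; apply: homo_ltn n_incr; apply: ltn_trans. Qed.

Lemma n_inj : injective n.
Proof. exact: incn_inj n_mono. Qed.

Lemma leq_n i : i <= n i.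
Proof. by elim: i => // i IH; apply: leq_ltn_trans IH (n_incr i). Qed.

Lemma eq_xblock (x y : cantor_space) i :
  (forall t, t < n i.+1 -> x t = y t) -> xblock n x i = xblock n y i.
Proof.
by move=> xy; apply/eq_in_map => u; rewrite mem_iota => u_lt; apply: xy; rewrite -ltn_subRL.
Qed.

Lemma sblock_restr x i j : j < i -> sblock n (restr x (n i)) j = xblock n x j.
Proof.
move=> ji; have nji : n j.+1 <= n i by rewrite n_mono.
have size_take : n j.+1 <= size (restr x (n i)) by rewrite size_restr.
apply: (@eq_from_nth _ false); rewrite /sblock size_drop size_takel //.
  by rewrite size_mkseq.
move=> u u_lt.
rewrite nth_drop nth_take -?ltn_subRL // nth_restr ?nth_mkseq //.
by apply: leq_trans nji; rewrite -ltn_subRL.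
Qed.

Lemma acceptable_restrP x i :
  acceptable n C (restr x (n i)) <-> forall j, j < i -> C j (xblock n x j).
Proof.
split=> [[i' [+ Cx]]|Cx]; last first.
  exists i; split=> [|j ji]; first exact: size_restr.
  by rewrite sblock_restr //; apply: Cx.
rewrite size_restr => /n_inj ii' j ji; subst i'.
by rewrite -(sblock_restr x ji); apply: Cx.
Qed.

Lemma tree_mapping_edge pi N k l m : tree_mapping pi N -> pi k l = Some m -> k < l < N.
Proof. by move=> [_ [edge _]] pikl; apply: edge; rewrite pikl. Qed.

Lemma inS_at_restrsP pi N i xs :
  inS_at i pi (restrs xs N (n i)) <->
  [/\ tree_mapping pi N, N <= n i,
      forall l j, l < N -> j < i -> C j (xblock n (xs l) j) &
      forall k l m, pi k l = Some m -> Tstar P m (restr (xorc (xs k) (xs l)) (n i))].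
Proof.
rewrite /Defs.inS_at size_restrs; split.
  move=> [tm [mem [Ni T]]]; split=> // [l j lN ji|k l m pikl].
    have /mem[/acceptable_restrP Cx _] : restr (xs l) (n i) \in restrs xs N (n i).
      by apply/restrsP; exists l.
    exact: Cx.
  have /andP[kl lN] := tree_mapping_edge tm pikl.
  by have := T k l m pikl; rewrite !nth_restrs ?(ltn_trans kl) // seqadd_restr.
move=> [tm Ni Cx T]; split=> //; split; last split=> // k l m pikl.
  move=> s /restrsP[l lN ->]; rewrite size_restr; split=> //.
  by apply/acceptable_restrP => j; apply: Cx.
have /andP[kl lN] := tree_mapping_edge tm pikl.
by rewrite !nth_restrs ?(ltn_trans kl) // seqadd_restr; apply: T.
Qed.

Lemma inS_restrs pi N j xs : inS pi (restrs xs N (n j)) -> inS_at j pi (restrs xs N (n j)).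
Proof.
move=> [i Si]; suff ij : i = j by subst i.
have [[N1 _] [mem _]] := Si; rewrite size_restrs in N1.
have /mem[_] : restr (xs 0) (n j) \in restrs xs N (n j) by apply/restrsP; exists 0.
by rewrite size_restr => /n_inj.
Qed.

Definition admissible pi N (xs : nat -> cantor_space) :=
  [/\ tree_mapping pi N, forall l, l < N -> H (xs l) &
      forall k l m, pi k l = Some m -> forall j, Tstar P m (restr (xorc (xs k) (xs l)) j)].

Lemma admissible_inS_at pi N xs i :
  admissible pi N xs -> N <= n i -> inS_at i pi (restrs xs N (n i)).
Proof.
move=> [tm Hxs T] Ni; apply/inS_at_restrsP; split=> // [l j lN _|k l m pikl].
  exact: Hxs.
exact: T.
Qed.

Lemma admissible_of_inS pi N xs :
  (forall j, exists2 j', j <= j' & inS_at j' pi (restrs xs N (n j'))) ->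
  admissible pi N xs.
Proof.
move=> Sxs; have [j0 _ /inS_at_restrsP[tm _ _ _]] := Sxs 0.
split=> // [l lN j|k l m pikl j].
  have [j' jj' /inS_at_restrsP[_ _ Cx _]] := Sxs j.+1.
  exact: Cx.
have [j' jj' /inS_at_restrsP[_ _ _ T]] := Sxs j.
by apply: Tstar_restr_leq (T _ _ _ pikl) _; apply: leq_trans jj' (leq_n j').
Qed.

Lemma admissible_U pi N xs i :
  admissible pi N xs -> N <= n i -> U pi (restrs xs N (n i)) (xs 0).
Proof.
move=> adm Ni; have [tm Hxs _] := adm.
exists i; rewrite size_restrs; split; first exact: admissible_inS_at.
split; first by apply: Hxs; case: tm.
exists xs; split=> //; split=> //; split=> [l lN|j ij].
  by rewrite nth_restrs // size_restr.
exists j; apply: admissible_inS_at adm _.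
by apply: leq_trans Ni _; rewrite n_mono ltnW.
Qed.

Lemma UP pi ss x : U pi ss x <-> exists i xs,
  [/\ xs 0 = x, admissible pi (size ss) xs, size ss <= n i
    & ss = restrs xs (size ss) (n i)].
Proof.
split=> [[i [Si [_ [xs [xs0 [_ [pref later]]]]]]]|[i [xs [<- adm Ni ss_xs]]]].
  have [_ [mem [Ni _]]] := Si.
  have ss_xs : ss = restrs xs (size ss) (n i).
    apply: (@eq_from_nth _ [::]) => [|l lN]; first by rewrite size_restrs.
    have [_ sz] := mem _ (mem_nth [::] lN).
    by rewrite nth_restrs // -sz pref.
  exists i, xs; split=> //; apply: admissible_of_inS => j.
  exists (i.+1 + j); first exact: leq_addl.
  by apply: inS_restrs; apply: later; rewrite addSn ltnS leq_addr.
by rewrite {1}ss_xs; apply: admissible_U.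
Qed.

Lemma admissible_embed pi N xs pi' N' (f : nat -> nat) :
  admissible pi N xs -> tree_mapping pi' N' ->
  (forall l, l < N' -> f l < N) ->
  (forall k l m, pi' k l = Some m -> pi (f k) (f l) = Some m) ->
  admissible pi' N' (xs \o f).
Proof.
move=> [_ Hxs T] tm' fN f_edge; split=> // [l lN'|k l m pikl].
  exact/Hxs/fN.
exact/T/f_edge.
Qed.

Lemma admissible_closed pi N xs :
  tree_mapping pi N ->
  (forall j, exists2 ys, admissible pi N ys &
     forall l t, l < N -> t < j -> xs l t = ys l t) ->
  admissible pi N xs.
Proof.
move=> tm approx; split=> // [l lN i|k l m pikl j].
  have [ys [_ Hys _] xy] := approx (n i.+1).
  by rewrite (@eq_xblock _ (ys l)) => [|t]; [apply: Hys | apply: xy].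
have [ys [_ _ T] xy] := approx j; have /andP[kl lN] := tree_mapping_edge tm pikl.
rewrite (@eq_restr _ (xorc (ys k) (ys l))) => [|t tj]; first exact: T pikl j.
by rewrite /xorc !xy // (ltn_trans kl).
Qed.

Lemma tree_mapping_parent pi N : tree_mapping pi N ->
  exists par : nat -> nat, forall l, 0 < l < N ->
    par l < l /\ forall k, pi k l <> None <-> k = par l.
Proof.
move=> [_ [edge parent]].
have /choice[par parP] (l : nat) : exists k, 0 < l < N ->
    k < l /\ forall k', pi k' l <> None <-> k' = k.
  have [lN|lN] := boolP (0 < l < N); last by exists 0 => l0N; case/negP: lN.
  have [k [[kl pkl] k_uniq]] := parent l lN.
  exists k => _; split=> // k'; split=> [pk'l|-> //].
  by apply/esym/k_uniq; split=> //; have /andP[] := edge _ _ pk'l.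
by exists par.
Qed.

Lemma parent_recursion T (par : nat -> nat) (g : nat -> T -> T) (x0 : T) N :
  (forall l, 0 < l < N -> par l < l) ->
  exists c : nat -> T, forall l, 0 < l < N -> c l = g l (c (par l)).
Proof.
elim: N => [|N IH] par_lt; first by exists (fun=> x0) => l; rewrite ltn0 andbF.
have [c cP] : exists c : nat -> T, forall l, 0 < l < N -> c l = g l (c (par l)).
  by apply: IH => l /andP[l0 lN]; apply: par_lt; rewrite l0 ltnS ltnW.
exists (fun l => if l == N then g N (c (par N)) else c l) => l /andP[l0].
rewrite ltnS leq_eqVlt => /orP[/eqP El|lN].
  by subst l; rewrite eqxx (ltn_eqF (par_lt N _)) // l0 /=.
have par_l := par_lt l; rewrite l0 ltnS ltnW // in par_l.
by rewrite (ltn_eqF lN) (ltn_eqF (ltn_trans (par_l erefl) lN)) cP // l0.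
Qed.

Lemma common_translate j (c : nat -> cantor_space) : exists2 s, size s = blen n j &
  forall l, l <= n j -> C j (seqadd s (xblock n (c l) j)).
Proof.
have size_blocks s : s \in mkseq (fun l => xblock n (c l) j) (n j).+1 -> size s = blen n j.
  by move=> /mapP[l _ ->]; rewrite size_mkseq.
have [[s [sz sC]] _] := C_rich (size_mkseq _ _) size_blocks.
by exists s => // l lj; apply: sC; apply/mapP; exists l; rewrite ?mem_iota.
Qed.

Lemma xblock_splice (x y : cantor_space) s j : size s = blen n j ->
  xblock n (fun t => if t < n j then x t else xorb (nth false s (t - n j)) (y t)) j =
  seqadd s (xblock n y j).
Proof.
move=> sz; rewrite [in RHS](_ : s = mkseq (nth false s) (blen n j)); last first.
  by rewrite -sz mkseq_nth.
by rewrite seqadd_mkseq; apply: eq_mkseq => u; rewrite ltnNge leq_addr addKn.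
Qed.

Lemma inS_at_extend pi N j xs :
  inS_at j pi (restrs xs N (n j)) ->
  exists2 ys, inS_at j.+1 pi (restrs ys N (n j.+1)) &
    forall l t, t < n j -> ys l t = xs l t.
Proof.
move=> /inS_at_restrsP[tm Nj Cxs Txs].
have [par parP] := tree_mapping_parent tm.
have /choice[z zP] (l : nat) : exists z, 0 < l < N ->
    exists2 m, pi (par l) l = Some m &
      Pstar P m z /\ forall t, t < n j -> z t = xorc (xs (par l)) (xs l) t.
  have [lN|lN] := boolP (0 < l < N); last by exists (xs 0) => l0N; case/negP: lN.
  have : pi (par l) l <> None by apply/(parP l lN).2.
  case E: (pi (par l) l) => [m|] // _.
  have [z [k [Pz /restr_inj[_ xz]]]] := Txs _ _ _ E.
  by exists z => _; exists m => //; split=> // t tj; rewrite xz.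
(* [c] realizes every edge [(par l, l)] by [z l]. *)
have [c cP] := parent_recursion (fun l x => xorc x (z l)) (xs 0) (fun l lN => (parP l lN).1).
have [s sz sC] := common_translate j c.
exists (fun l t => if t < n j then xs l t else xorb (nth false s (t - n j)) (c l t));
  last by move=> l t ->.
apply/inS_at_restrsP; split=> // [|l i lN|k l m pikl].
- by apply: leq_trans Nj _; rewrite n_mono.
- rewrite ltnS leq_eqVlt => /orP[/eqP->|ij].
    by rewrite xblock_splice //; apply: sC; apply: leq_trans (ltnW lN) Nj.
  rewrite (@eq_xblock _ (xs l)) => [|t ti]; first exact: Cxs.
  by have -> : t < n j by apply: leq_trans ti _; rewrite n_mono.
have /andP[kl lN] := tree_mapping_edge tm pikl.
have l0N : 0 < l < N by rewrite lN (leq_ltn_trans _ kl).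
have kpar : k = par l by apply/(parP l l0N).2; rewrite pikl.
have [m' pm' [Pz zx]] := zP l l0N.
move: pm'; rewrite -kpar pikl => -[mm']; subst m'.
exists (z l), (n j.+1); split=> //; apply: eq_restr => t _.
rewrite /xorc; case: ifP => tj; first by rewrite kpar zx.
move: (congr1 (fun f => f t) (cP l l0N)); rewrite /= /xorc -kpar => ->.
by case: (nth false s _); case: (c k t); case: (z l t).
Qed.

Lemma inS_at_admissible pi ss i : inS_at i pi ss ->
  exists2 xs, admissible pi (size ss) xs & ss = restrs xs (size ss) (n i).
Proof.
move=> Si; set N := size ss.
pose xs0 l : cantor_space := fun t => nth false (nth [::] ss l) t.
have ss_xs0 : ss = restrs xs0 N (n i).
  have [_ [mem _]] := Si.
  apply: (@eq_from_nth _ [::]) => [|l lN]; first by rewrite size_restrs.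
  have [_ <-] := mem _ (mem_nth [::] lN).
  by rewrite nth_restrs // /xs0 restr_nth.
pose Inv r xs := inS_at (i + r) pi (restrs xs N (n (i + r))).
pose agree r (xs ys : nat -> cantor_space) := forall l t, t < n (i + r) -> ys l t = xs l t.
have Inv0 : Inv 0 xs0 by rewrite /Inv addn0 -ss_xs0.
have step r xs : Inv r xs -> exists2 ys, Inv r.+1 ys & agree r xs ys.
  by rewrite /Inv addnS; apply: inS_at_extend.
have [st [st0 stP]] := iterate_step Inv0 step.
have levels_homo : {homo (fun r => n (i + r)) : r s / r <= s}.
  by move=> r s rs; rewrite n_mono leq_add2l.
have [g gP] := @fusion_limit st (fun=> N) _ (fun _ _ _ => leqnn N) levels_homo
  (fun r l t _ => (stP r).2 l t).
have g_st r : restrs g N (n (i + r)) = restrs (st r) N (n (i + r)).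
  by apply: eq_restrs => l t; apply: gP.
exists g.
  apply: admissible_of_inS => j; exists (i + j); first exact: leq_addl.
  by rewrite g_st; apply: (stP j).1.
by rewrite {1}ss_xs0 -(addn0 i) g_st st0.
Qed.

(* [graft N pi pi2] hangs the tree [pi2] below the root of [pi]: node [l2 > 0]
   of [pi2] becomes node [N + l2 - 1], and the root of [pi2] is identified with
   the root of [pi]. *)
Definition graft N (pi pi2 : nat -> nat -> option nat) k l :=
  if l < N then pi k l else if k == 0 then pi2 0 (l - N).+1
  else if N <= k then pi2 (k - N).+1 (l - N).+1 else None.

Definition graft_node N l2 := if l2 == 0 then 0 else N + l2.-1.

Definition graft_pts N (xs xs2 : nat -> cantor_space) l :=
  if l < N then xs l else xs2 (l - N).+1.

Lemma graft_node_sub N l : N <= l -> graft_node N (l - N).+1 = l.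
Proof. by rewrite /graft_node /= => Nl; rewrite subnKC. Qed.

Lemma graft_edge N pi pi2 k2 l2 : 0 < N -> 0 < l2 ->
  graft N pi pi2 (graft_node N k2) (graft_node N l2) = pi2 k2 l2.
Proof.
move=> N0; case: l2 => // l2 _; rewrite /graft /graft_node /= ltnNge leq_addr addKn.
by case: k2 => [|k2] //=; rewrite addn_eq0 (gtn_eqF N0) leq_addr addKn.
Qed.

Lemma graftP N pi pi2 k l : N <= l -> graft N pi pi2 k l <> None ->
  exists2 k2, k = graft_node N k2 & graft N pi pi2 k l = pi2 k2 (l - N).+1.
Proof.
rewrite /graft /graft_node => Nl; rewrite ltnNge Nl /=.
case: eqP => [-> _|/eqP k0]; first by exists 0.
by case: ifP => // Nk _; exists (k - N).+1 => //=; lia.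
Qed.

Lemma tree_mapping_graft N N2 pi pi2 : tree_mapping pi N -> tree_mapping pi2 N2 ->
  tree_mapping (graft N pi pi2) (N + N2.-1).
Proof.
move=> [N1 [edge1 parent1]] [N21 [edge2 parent2]]; split; first lia.
split=> [k l|l lN'].
  have [lN|Nl] := ltnP l N; first by rewrite /graft lN => /edge1; lia.
  move=> pkl; have [k2 kk2 e] := graftP Nl pkl; rewrite e in pkl; subst k.
  by have := edge2 _ _ pkl; rewrite /graft_node; case: eqP; lia.
have [lN|Nl] := ltnP l N.
  have [k [[kl pkl] k_uniq]] := parent1 l ltac:(lia).
  by exists k; rewrite /graft lN; split.
have [k2 [[k2l pk2l] k2_uniq]] := parent2 (l - N).+1 ltac:(lia).
exists (graft_node N k2); split.
  split; first by rewrite /graft_node; case: eqP; lia.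
  by rewrite -(graft_node_sub Nl) graft_edge.
move=> k [kl pkl]; have [k2' kk2' e] := graftP Nl pkl; rewrite e in pkl; subst k.
congr graft_node; apply: k2_uniq; split=> //.
by move: kl; rewrite /graft_node; case: eqP; lia.
Qed.

Lemma graft_pts_node N xs xs2 l2 : 0 < N -> xs 0 = xs2 0 ->
  graft_pts N xs xs2 (graft_node N l2) = xs2 l2.
Proof.
rewrite /graft_pts /graft_node => N0 x0; case: l2 => [|l2] /=; first by rewrite N0.
by rewrite ltnNge leq_addr /=; congr xs2; lia.
Qed.

Lemma admissible_graft pi N xs pi2 N2 xs2 :
  admissible pi N xs -> admissible pi2 N2 xs2 -> xs 0 = xs2 0 ->
  admissible (graft N pi pi2) (N + N2.-1) (graft_pts N xs xs2).
Proof.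
move=> [tm Hxs T] [tm2 Hxs2 T2] x0; have N0 : 0 < N by case: tm.
split=> [|l lN'|k l m].
- exact: tree_mapping_graft.
- by rewrite /graft_pts; case: ifP => lN; [apply: Hxs | apply: Hxs2; lia].
have [lN|Nl] := ltnP l N.
  rewrite {1}/graft lN => pikl; have /andP[kl _] := tree_mapping_edge tm pikl.
  by rewrite /graft_pts lN (ltn_trans kl lN); apply: T.
move=> pikl; have pkl : graft N pi pi2 k l <> None by rewrite pikl.
have [k2 kk2 e] := graftP Nl pkl; rewrite e in pikl; subst k.
by rewrite -(graft_node_sub Nl) !graft_pts_node //; apply: T2.
Qed.

Lemma U_sub_H pi ss : U pi ss `<=` H.
Proof. by move=> x [i [_ [Hx _]]]. Qed.

Lemma U_open pi ss : inS pi ss -> tau_open (U pi ss).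
Proof.
by move=> Sss; split=> [|x Ux]; [apply: U_sub_H | exists pi, ss; do !split].
Qed.

Lemma nowhere_dense_avoid F V : tau_nowhere_dense F -> tau_open V -> V !=set0 ->
  exists x pi ss, [/\ V x, U pi ss x & forall y, U pi ss y -> ~ F y].
Proof.
move=> [_ int0] [VH Vbasis] [x0 Vx0].
have [x [Vx nFx]] : exists x, V x /\ ~ tau_closure n C P F x.
  apply: contrapT => allF; suff : tau_interior n C P (tau_closure n C P F) x0 by rewrite int0.
  exists V; do 2!split=> //; move=> y Vy; apply: contrapT => nFy; apply: allF.
  by exists y.
have [W [oW Wx WF]] : exists W, [/\ tau_open W, W x & forall y, W y -> ~ F y].
  apply: contrapT => noW; apply: nFx; split; first exact: VH.
  move=> W oW Wx; apply: contrapT => noy; apply: noW; exists W; split=> // y Wy Fy.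
  by apply: noy; exists y.
have [pi [ss [_ [Ux UW]]]] := oW.2 x Wx.
by exists x, pi, ss; split=> // y /UW; apply: WF.
Qed.

Lemma graft_U_sub pi N xs pi2 N2 xs2 i2 i' :
  admissible pi N xs -> admissible pi2 N2 xs2 -> xs 0 = xs2 0 ->
  N2 <= n i2 -> i2 <= i' ->
  U (graft N pi pi2) (restrs (graft_pts N xs xs2) (N + N2.-1) (n i')) `<=`
  U pi2 (restrs xs2 N2 (n i2)).
Proof.
move=> [tm _ _] [tm2 _ _] x0 N2i2 i2i' y /UP[i3 [xs3 [<- + _]]].
rewrite !size_restrs => adm3 /restrs_inj xs3_agree.
have N0 : 0 < N by case: tm.
have node_lt l2 : l2 < N2 -> graft_node N l2 < N + N2.-1.
  by rewrite /graft_node; case: eqP; lia.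
have adm4 : admissible pi2 N2 (xs3 \o graft_node N).
  apply: (admissible_embed adm3 tm2 node_lt) => k2 l2 m pikl.
  have /andP[k2l2 _] := tree_mapping_edge tm2 pikl.
  by rewrite graft_edge // (leq_ltn_trans _ k2l2).
suff -> : restrs xs2 N2 (n i2) = restrs (xs3 \o graft_node N) N2 (n i2).
  exact: admissible_U adm4 N2i2.
apply: eq_restrs => l2 t l2N2 tn /=.
rewrite -xs3_agree ?graft_pts_node ?node_lt //.
by apply: leq_trans tn _; rewrite n_mono.
Qed.

Definition valid_stage s :=
  admissible (stage_tree s) (stage_size s) (stage_pts s) /\
  stage_size s <= n (stage_level s).

Definition stage_set s :=
  U (stage_tree s) (restrs (stage_pts s) (stage_size s) (n (stage_level s))).

Definition refines s s' :=
  [/\ stage_size s <= stage_size s', stage_level s < stage_level s',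
      forall l t, l < stage_size s -> t < n (stage_level s) ->
        stage_pts s' l t = stage_pts s l t &
      forall k l, l < stage_size s -> stage_tree s' k l = stage_tree s k l].

Lemma stage_set_pts0 s : valid_stage s -> stage_set s (stage_pts s 0).
Proof. by move=> [adm Ni]; apply: admissible_U. Qed.

Lemma refine_avoiding s F : valid_stage s -> tau_nowhere_dense F ->
  exists2 s', valid_stage s' & refines s s' /\ forall y, stage_set s' y -> ~ F y.
Proof.
(* The next stage grafts the witnesses of a point [x] for a basic set around [x]
   missing [F] onto the witnesses of [x] for the current basic set. *)
case: s => pi N i xs [/= adm Ni] Fnd.
have [x [pi2 [ss2 [Vx U2x U2F]]]] := nowhere_dense_avoid Fnd
  (U_open (ex_intro _ i (admissible_inS_at adm Ni))) (ex_intro _ _ (admissible_U adm Ni)).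
move/UP: Vx; rewrite size_restrs => -[i1 [xs1 [x1 adm1 _ /restrs_inj xs_xs1]]].
have /UP[i2 [xs2 [x2 adm2 N2i2 ss2_xs2]]] := U2x.
set N2 := size ss2 in adm2 N2i2 ss2_xs2.
pose N' := N + N2.-1; pose i' := (maxn (maxn i i2) N').+1.
have x12 : xs1 0 = xs2 0 by rewrite x1 x2.
exists (Stage (graft N pi pi2) N' i' (graft_pts N xs1 xs2)); split=> /=.
- exact: admissible_graft.
- exact: leq_trans (leq_trans (leq_maxr _ _) (leqnSn _)) (leq_n i').
- split=> /= [||l t lN ti|k l lN]; first exact: leq_addr.
  + by rewrite ltnS (leq_trans (leq_maxl i i2) (leq_maxl _ _)).
  + by rewrite /graft_pts lN xs_xs1.
  + by rewrite /graft lN.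
move=> y /(graft_U_sub adm1 adm2 x12 N2i2) U2y; apply: U2F.
rewrite ss2_xs2; apply: U2y.
exact: leq_trans (leq_trans (leq_maxr i i2) (leq_maxl _ _)) (leqnSn _).
Qed.

Lemma stage_set_not_meager s : valid_stage s -> ~ tau_meager (stage_set s).
Proof.
move=> s_valid [_ [F [Fnd cover]]].
pose avoiding r s1 s2 := refines s1 s2 /\ forall y, stage_set s2 y -> ~ F r y.
have step r s1 : valid_stage s1 -> exists2 s2, valid_stage s2 & avoiding r s1 s2.
  by move=> v1; apply: refine_avoiding.
have [st [st0 stP]] := @iterate_step _ (fun=> valid_stage) avoiding s s_valid step.
pose N r := stage_size (st r); pose lev r := stage_level (st r).
have st_refines r : refines (st r) (st r.+1) by case: (stP r) => _ [].
have N_homo : {homo N : r r' / r <= r'}.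
  by apply: homo_leq leqnn leq_trans _ => r; case: (st_refines r).
have lev_homo : {homo lev : r r' / r < r'}.
  by apply: homo_ltn ltn_trans _ => r; case: (st_refines r).
have lev_ge r : r <= lev r.
  by elim: r => // r IH; apply: leq_ltn_trans IH (lev_homo _ _ (ltnSn r)).
have nlev_homo : {homo (fun r => n (lev r)) : r r' / r <= r'}.
  by move=> r r' rr'; rewrite n_mono; apply: (ltnW_homo lev_homo).
have [g gP] := @fusion_limit (fun r => stage_pts (st r)) N _ N_homo nlev_homo
  (fun r => let: And4 _ _ pts_agree _ := st_refines r in pts_agree).
have tree_shift r d k l : l < N r -> stage_tree (st (r + d)) k l = stage_tree (st r) k l.
  have stepQ r' : l < N r' ->
      l < N r'.+1 /\ stage_tree (st r'.+1) k l = stage_tree (st r') k l.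
    case: (st_refines r') => N_le _ _ tree_agree lN'.
    by split; [apply: leq_trans lN' N_le | apply: tree_agree].
  by move=> lN; apply: (stable_shift stepQ d lN).2.
have in_stage r : stage_set (st r) (g 0).
  have [[[tm _ _] Nlev] _] := stP r.
  suff adm : admissible (stage_tree (st r)) (N r) g.
    rewrite /stage_set (@eq_restrs _ g) => [|l t lN tn]; first exact: admissible_U.
    by rewrite (gP r).
  apply: (admissible_closed tm) => j; have [[adm' _] _] := stP (r + j).
  exists (stage_pts (st (r + j))) => [|l t lN tj].
    apply: (admissible_embed (f := id) adm' tm) => [l lN|k l m pikl].
      exact: leq_trans lN (N_homo _ _ (leq_addr _ _)).
    have /andP[_ lN] := tree_mapping_edge tm pikl.
    by rewrite /= tree_shift.
  apply: (gP (r + j)); first exact: leq_trans lN (N_homo _ _ (leq_addr _ _)).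
  apply: leq_trans tj (leq_trans (leq_addl r j) (leq_trans (lev_ge _) (leq_n _))).
have /cover[k _ Fk] : stage_set s (g 0) by rewrite -st0.
by case: (stP k) => _ [_]; apply; [apply: in_stage | apply: Fk].
Qed.

Lemma inS_stage pi ss : inS pi ss -> exists2 s, valid_stage s & U pi ss = stage_set s.
Proof.
move=> [i Si]; have [xs adm ss_xs] := inS_at_admissible Si.
have [_ [_ [Ni _]]] := Si.
by exists (Stage pi (size ss) i xs); rewrite /stage_set /= -?ss_xs.
Qed.

End Fusion.

Theorem proposition2p6
  (n : nat -> nat) (C : nat -> set (seq bool)) (P : nat -> set cantor_space)
  (n0 : n 0 = 0%N)
  (n_incr : forall i, (n i < n i.+1)%N)
  (C_sub : forall i s, C i s -> size s = blen n i)
  (C_rich : forall i (ss : seq (seq bool)),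
     size ss = (n i).+1 ->
     (forall s, s \in ss -> size s = blen n i) ->
     (exists t, size t = blen n i /\ forall s, s \in ss -> C i (seqadd t s)) /\
     (exists t, size t = blen n i /\ forall s, s \in ss -> ~ C i (seqadd t s)))
  (P_perfect : forall m, perfect_set (P m))
  (P_nonempty : forall m, P m !=set0) :
  (forall pi ss, inS n C P pi ss ->
     U n C P pi ss !=set0 /\ ~ tau_meager n C P (U n C P pi ss)) /\
  tau_Baire n C P.
Proof.
have U_basic pi ss : inS n C P pi ss ->
    U n C P pi ss !=set0 /\ ~ tau_meager n C P (U n C P pi ss).
  move=> /(inS_stage n_incr C_rich)[s s_valid ->]; split.
    by exists (stage_pts s 0); apply: stage_set_pts0.
  exact: stage_set_not_meager.
split=> // V [_ Vbasis] [x Vx] [_ [F [Fnd cover]]].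
have [pi [ss [Sss [_ UV]]]] := Vbasis x Vx.
apply: (U_basic pi ss Sss).2; split; first exact: U_sub_H.
by exists F; split=> // y /UV /cover.
Qed.
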